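(* Let $n\ge2$, $\lambda>0$, and $\rho=(\rho_1,\dots,\rho_n)^\top\in(0,1)^n$ with $\sum_{j=1}^n\rho_j=1$. Let $\mathbf{A}=\rho\otimes(1,\dots,1)-\mathbf{I}\in\mathbb{R}^{n\times n}$ and consider $\frac{\mathrm{d}}{\mathrm{d}t}f=2\lambda\mathbf{A}f$, $f(0)=f^I\in\mathbb{R}^n$, with steady state $f^\infty=\rho$. Let $\psi\in C^2(J)$ be a convex entropy generator such that, for some $\mu>0$ and all $u=(u_1,\dots,u_n)^\top\in[0,1]^n$ with $\sum_j u_j=1$, $$\sum_{j=1}^n\psi''\Big(\frac{u_j}{\rho_j}\Big)\frac{1}{\rho_j}(\rho_j-u_j)^2\ \ge\ \frac{\mu}{2\lambda}\sum_{j=1}^n\psi'\Big(\frac{u_j}{\rho_j}\Big)(u_j-\rho_j).$$ Then for all non-negative normalized initial data $f^I$ (i.e. $f^I_j\ge0$, $\sum_jf^I_j=1$) the solution satisfies $$I_\psi(f(t)|f^\infty)\le e^{-(2\lambda+\mu)t}I_\psi(f^I|f^\infty),\qquad e_\psi(f(t)|f^\infty)\le e^{-(2\lambda+\mu)t}e_\psi(f^I|f^\infty),\qquad t\ge0.$$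
   Context: $J$ is $\mathbb{R}^+$ or $\mathbb{R}$. An entropy generator is a function $\psi\in C(\bar J)\cap C^2(J)$ with $\psi(1)=0$, $\psi\ge0$, $\psi''\ge0$ on $J$. The relative entropy is $e_\psi(f|f^\infty)=\sum_{j=1}^n\psi(f_j/f^\infty_j)f^\infty_j$ and the Fisher information is $I_\psi(f|f^\infty)=\sum_{j=1}^n\psi'(f_j/f^\infty_j)\,2\lambda\,(f_j-f^\infty_j)$ (so that $\frac{\mathrm{d}}{\mathrm{d}t}e_\psi(f(t)|f^\infty)=-I_\psi(f(t)|f^\infty)$). *)

From Stdlib Require Import Reals Lra.
From Coquelicot Require Import Coquelicot.
Open Scope R_scope.

(* Finite sum  F 0 + ... + F (n-1). Vectors in R^n are functions nat -> R,
   only the indices j < n matter. *)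
Fixpoint rsum (n : nat) (F : nat -> R) : R :=
  match n with
  | O => 0
  | S k => rsum k F + F k
  end.

(* The interval J: Jpos = true means J = R^+ = (0,+oo), Jpos = false means J = R. *)
Definition inJ (Jpos : bool) (x : R) : Prop := if Jpos then 0 < x else True.
Definition inJbar (Jpos : bool) (x : R) : Prop := if Jpos then 0 <= x else True.

(* psi' and psi'' (Coquelicot's total derivative; meaningful on J). *)
Definition psi_d1 (psi : R -> R) : R -> R := Derive psi.
Definition psi_d2 (psi : R -> R) : R -> R := Derive (Derive psi).

Definition entropy_generator (Jpos : bool) (psi : R -> R) : Prop :=
  (forall x, inJbar Jpos x ->
     filterlim psi (within (inJbar Jpos) (locally x)) (locally (psi x))) /\
  (forall x, inJ Jpos x ->
     ex_derive psi x /\ ex_derive (Derive psi) x /\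
     continuous (Derive (Derive psi)) x) /\
  psi 1 = 0 /\
  (forall x, inJbar Jpos x -> 0 <= psi x) /\
  (forall x, inJ Jpos x -> 0 <= psi_d2 psi x).

Definition e_psi (n : nat) (psi : R -> R) (f finf : nat -> R) : R :=
  rsum n (fun j => psi (f j / finf j) * finf j).

Definition I_psi (n : nat) (lam : R) (psi : R -> R) (f finf : nat -> R) : R :=
  rsum n (fun j => psi_d1 psi (f j / finf j) * (2 * lam) * (f j - finf j)).

(* (A f)_i for A = rho (x) (1,...,1) - I. *)
Definition Amul (n : nat) (rho f : nat -> R) (i : nat) : R :=
  rho i * rsum n f - f i.

From Stdlib Require Import Reals Lra Lia.
From Coquelicot Require Import Coquelicot.
Open Scope R_scope.

(* The solution is f(t) = rho + s (fI - rho) with s = exp(-2 lam t), so along the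
   flow both functionals are functions of s on the segment from rho to fI.  There
   s d/ds of the first variation V1 = sum psi'(u/rho)(u - rho) equals V1 plus the
   second variation V2 = sum psi''(u/rho)/rho (rho - u)^2, and the curvature
   hypothesis 2 lam V2 >= mu V1 turns this into dI/dt <= -(2 lam + mu) I.  For the
   entropy, de/dt = -I, and the same identity shows that (2 lam + mu) e - I is
   nonincreasing in s and vanishes at s = 0, hence (2 lam + mu) e <= I.  Both
   estimates then follow from Gronwall's lemma. *)

Lemma rsum_ext n F G :
  (forall j, (j < n)%nat -> F j = G j) -> rsum n F = rsum n G.
Proof.
  induction n as [|n IH]; intros H; simpl; [reflexivity|].
  rewrite IH by (intros; apply H; lia). rewrite H by lia. reflexivity.
Qed.

Lemma rsum_plus n F G : rsum n (fun j => F j + G j) = rsum n F + rsum n G.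
Proof. induction n as [|n IH]; simpl; [|rewrite IH]; ring. Qed.

Lemma rsum_minus n F G : rsum n (fun j => F j - G j) = rsum n F - rsum n G.
Proof. induction n as [|n IH]; simpl; [|rewrite IH]; ring. Qed.

Lemma rsum_scal n c F : rsum n (fun j => c * F j) = c * rsum n F.
Proof. induction n as [|n IH]; simpl; [|rewrite IH]; ring. Qed.

Lemma rsum_le n F G :
  (forall j, (j < n)%nat -> F j <= G j) -> rsum n F <= rsum n G.
Proof.
  induction n as [|n IH]; intros H; simpl; [lra|].
  pose proof (H n ltac:(lia)). pose proof (IH ltac:(intros; apply H; lia)). lra.
Qed.

Lemma rsum_term_le n F j :
  (forall i, (i < n)%nat -> 0 <= F i) -> (j < n)%nat -> F j <= rsum n F.
Proof.
  induction n as [|n IH]; intros H Hj; simpl; [lia|].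
  assert (Hsum : 0 <= rsum n F).
  { rewrite <- (Rmult_0_l (rsum n F)), <- rsum_scal.
    apply rsum_le; intros i Hi. rewrite Rmult_0_l. apply H; lia. }
  pose proof (H n ltac:(lia)).
  destruct (Nat.eq_dec j n) as [->|Hjn]; [lra|].
  pose proof (IH ltac:(intros; apply H; lia) ltac:(lia)). lra.
Qed.

Lemma is_derive_rsum n (F : nat -> R -> R) (dF : nat -> R) x :
  (forall j, (j < n)%nat -> is_derive (F j) x (dF j)) ->
  is_derive (fun t => rsum n (fun j => F j t)) x (rsum n dF).
Proof.
  induction n as [|n IH]; intros H; simpl.
  - auto_derive; reflexivity.
  - apply (is_derive_plus (fun t => rsum n (fun j => F j t)) (F n)).
    + apply IH; intros; apply H; lia.
    + apply H; lia.
Qed.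

Lemma continuous_rsum n (F : nat -> R -> R) x :
  (forall j, (j < n)%nat -> continuous (F j) x) ->
  continuous (fun t => rsum n (fun j => F j t)) x.
Proof.
  induction n as [|n IH]; intros H; simpl.
  - apply continuous_const.
  - apply (continuous_plus (fun t => rsum n (fun j => F j t)) (F n)).
    + apply IH; intros; apply H; lia.
    + apply H; lia.
Qed.

Lemma continuous_comp_within (D : R -> Prop) (h g : R -> R) x :
  (forall y, D (g y)) -> continuous g x ->
  filterlim h (within D (locally (g x))) (locally (h (g x))) ->
  continuous (fun y => h (g y)) x.
Proof.
  intros HD Hg Hh P HP.
  specialize (Hg _ (Hh P HP)). unfold filtermap in *.
  eapply filter_imp; [|exact Hg]. intros y Hy. exact (Hy (HD y)).
Qed.

Lemma continuous_of_is_derive (g : R -> R) x l :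
  is_derive g x l -> continuous g x.
Proof. intros H. apply (ex_derive_continuous g). exists l. exact H. Qed.

Lemma is_derive_zero_const (h : R -> R) t :
  (forall x, is_derive h x 0) -> h t = h 0.
Proof.
  intros H. destruct (MVT_gen h 0 t (fun _ => 0)) as [c [_ Hc]].
  - intros x _. apply H.
  - intros x _.
    apply continuity_pt_filterlim, (continuous_of_is_derive h x 0), H.
  - lra.
Qed.

Lemma linear_ode_exp (h : R -> R) k t :
  (forall x, is_derive h x (- k * h x)) -> h t = exp (- k * t) * h 0.
Proof.
  intros H.
  assert (Hc : exp (k * t) * h t = exp (k * 0) * h 0).
  { apply (is_derive_zero_const (fun x => exp (k * x) * h x)). intros x.
    replace 0 with (exp (k * x) * k * h x + exp (k * x) * (- k * h x)) by ring.
    apply (is_derive_mult (fun x => exp (k * x)) h).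
    - auto_derive; [auto|ring].
    - apply H.
    - intros; apply Rmult_comm. }
  rewrite Rmult_0_r, exp_0, Rmult_1_l in Hc.
  rewrite <- Hc, <- Rmult_assoc, <- exp_plus.
  replace (- k * t + k * t) with 0 by ring.
  rewrite exp_0. ring.
Qed.

Lemma exp_neg_bounds c x : 0 < c -> 0 <= x -> 0 < exp (- c * x) <= 1.
Proof.
  intros Hc Hx. split; [apply exp_pos|]. rewrite <- exp_0.
  destruct (Rle_lt_or_eq_dec 0 x Hx) as [Hx'|<-].
  - left. apply exp_increasing. nra.
  - right. f_equal. ring.
Qed.

Lemma exp_neg_lt_1 c x : 0 < c -> 0 < x -> exp (- c * x) < 1.
Proof. intros Hc Hx. rewrite <- exp_0. apply exp_increasing. nra. Qed.

Lemma nonincreasing_of_derive_nonpos (g dg : R -> R) a b :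
  a <= b ->
  (forall x, a <= x <= b -> continuous g x) ->
  (forall x, a < x < b -> is_derive g x (dg x)) ->
  (forall x, a < x < b -> dg x <= 0) ->
  g b <= g a.
Proof.
  intros Hab Hc Hd Hneg.
  destruct (Req_dec a b) as [<-|Hab']; [lra|].
  assert (pr1 : forall c, a < c < b -> derivable_pt g c).
  { intros c Hc'. exists (dg c). apply is_derive_Reals, Hd, Hc'. }
  assert (pr2 : forall c, a < c < b -> derivable_pt id c)
    by (intros; apply derivable_pt_id).
  destruct (MVT g id a b pr1 pr2 ltac:(lra)
              (fun x Hx => proj2 (continuity_pt_filterlim g x) (Hc x Hx))
              (fun c _ => derivable_continuous_pt _ _ (derivable_pt_id c)))
    as [c [Hcab Hmvt]].
  rewrite (derive_pt_eq_0 id c 1 (pr2 c Hcab) (derivable_pt_lim_id c)) in Hmvt.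
  rewrite (derive_pt_eq_0 g c (dg c) (pr1 c Hcab)
             (proj1 (is_derive_Reals _ _ _) (Hd c Hcab))) in Hmvt.
  unfold id in Hmvt. pose proof (Hneg c Hcab). nra.
Qed.

Lemma exp_decay_of_derive_le (g dg : R -> R) c t :
  0 <= t ->
  (forall x, 0 <= x <= t -> continuous g x) ->
  (forall x, 0 < x < t -> is_derive g x (dg x)) ->
  (forall x, 0 < x < t -> dg x <= - c * g x) ->
  g t <= exp (- c * t) * g 0.
Proof.
  intros Ht Hc Hd Hle.
  assert (Hmono : exp (c * t) * g t <= exp (c * 0) * g 0).
  { apply (nonincreasing_of_derive_nonpos (fun x => exp (c * x) * g x)
             (fun x => exp (c * x) * (c * g x + dg x))); [exact Ht| | |].
    - intros x Hx. apply (continuous_mult (fun x => exp (c * x)) g).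
      + apply (continuous_of_is_derive _ x (c * exp (c * x))).
        auto_derive; [auto|ring].
      + apply Hc, Hx.
    - intros x Hx. replace (exp (c * x) * (c * g x + dg x))
        with (exp (c * x) * c * g x + exp (c * x) * dg x) by ring.
      apply (is_derive_mult (fun x => exp (c * x)) g).
      + auto_derive; [auto|ring].
      + apply Hd, Hx.
      + intros; apply Rmult_comm.
    - intros x Hx. pose proof (Hle x Hx). pose proof (exp_pos (c * x)). nra. }
  rewrite Rmult_0_r, exp_0, Rmult_1_l in Hmono.
  replace (g t) with (exp (- c * t) * (exp (c * t) * g t)).
  - pose proof (exp_pos (- c * t)). nra.
  - rewrite <- Rmult_assoc, <- exp_plus. replace (- c * t + c * t) with 0 by ring.
    rewrite exp_0. ring.
Qed.

Definition first_variation (n : nat) (psi : R -> R) (rho u : nat -> R) : R :=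
  rsum n (fun j => psi_d1 psi (u j / rho j) * (u j - rho j)).

Definition second_variation (n : nat) (psi : R -> R) (rho u : nat -> R) : R :=
  rsum n (fun j => psi_d2 psi (u j / rho j) * / rho j * (rho j - u j) ^ 2).

Lemma I_psi_first_variation n lam psi u rho :
  I_psi n lam psi u rho = 2 * lam * first_variation n psi rho u.
Proof.
  unfold I_psi, first_variation. rewrite <- rsum_scal.
  apply rsum_ext; intros; ring.
Qed.

Section Interpolation.

Variables (n : nat) (Jpos : bool) (psi : R -> R) (rho fI : nat -> R).

Definition interp (r : R) (j : nat) : R := rho j + r * (fI j - rho j).

Lemma interp_1 j : interp 1 j = fI j.
Proof. unfold interp. ring. Qed.

Lemma interp_ratio_in_J r j :
  0 < rho j -> 0 <= fI j -> 0 <= r < 1 -> inJ Jpos (interp r j / rho j).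
Proof.
  intros Hrho HfI Hr. unfold inJ, interp. destruct Jpos; [|exact I].
  apply Rdiv_lt_0_compat; nra.
Qed.

Lemma interp_ratio_in_Jbar r j :
  0 < rho j -> 0 <= fI j -> 0 <= r <= 1 -> inJbar Jpos (interp r j / rho j).
Proof.
  intros Hrho HfI Hr. unfold inJbar, interp. destruct Jpos; [|exact I].
  apply Rdiv_le_0_compat; nra.
Qed.

Definition entropy_slope (r : R) : R :=
  rsum n (fun j => psi_d1 psi (interp r j / rho j) * (fI j - rho j)).

Definition first_variation_slope (r : R) : R :=
  rsum n (fun j => psi_d2 psi (interp r j / rho j) * / rho j * (fI j - rho j)
                     * (interp r j - rho j)
                   + psi_d1 psi (interp r j / rho j) * (fI j - rho j)).

Lemma entropy_slope_scale r :
  r * entropy_slope r = first_variation n psi rho (interp r).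
Proof.
  unfold entropy_slope, first_variation. rewrite <- rsum_scal.
  apply rsum_ext; intros; unfold interp; ring.
Qed.

Lemma first_variation_slope_scale r :
  r * first_variation_slope r =
  second_variation n psi rho (interp r) + first_variation n psi rho (interp r).
Proof.
  unfold first_variation_slope, first_variation, second_variation.
  rewrite <- rsum_scal, <- rsum_plus.
  apply rsum_ext; intros; unfold interp; ring.
Qed.

Hypothesis rho_pos : forall j, (j < n)%nat -> 0 < rho j.

Hypothesis psi_derivable :
  forall x, inJ Jpos x -> ex_derive psi x /\ ex_derive (Derive psi) x.

Lemma is_derive_entropy_interp r :
  (forall j, (j < n)%nat -> inJ Jpos (interp r j / rho j)) ->
  is_derive (fun r => e_psi n psi (interp r) rho) r (entropy_slope r).
Proof.
  intros HJ. unfold e_psi, entropy_slope.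
  apply (is_derive_rsum n (fun j r => psi (interp r j / rho j) * rho j)).
  intros j Hj. destruct (psi_derivable _ (HJ j Hj)) as [Hd1 _].
  pose proof (rho_pos j Hj).
  unfold interp, psi_d1 in *. auto_derive; [exact Hd1|].
  change (fun x => psi x) with psi. unfold Rdiv. field. lra.
Qed.

Lemma is_derive_first_variation_interp r :
  (forall j, (j < n)%nat -> inJ Jpos (interp r j / rho j)) ->
  is_derive (fun r => first_variation n psi rho (interp r)) r
    (first_variation_slope r).
Proof.
  intros HJ. unfold first_variation, first_variation_slope.
  apply (is_derive_rsum n
           (fun j r => psi_d1 psi (interp r j / rho j) * (interp r j - rho j))).
  intros j Hj. destruct (psi_derivable _ (HJ j Hj)) as [_ Hd2].
  unfold interp, psi_d1, psi_d2 in *. auto_derive; [exact Hd2|].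
  change (fun x => Derive psi x) with (Derive psi). unfold Rdiv. ring.
Qed.

Hypothesis psi_continuous :
  forall x, inJbar Jpos x ->
    filterlim psi (within (inJbar Jpos) (locally x)) (locally (psi x)).

Hypothesis fI_nonneg : forall j, (j < n)%nat -> 0 <= fI j.

Lemma continuous_entropy_interp (s : R -> R) x :
  continuous s x -> (forall y, 0 <= s y <= 1) ->
  continuous (fun y => e_psi n psi (interp (s y)) rho) x.
Proof.
  intros Hs Hs01. unfold e_psi.
  apply (continuous_rsum n (fun j y => psi (interp (s y) j / rho j) * rho j)).
  intros j Hj.
  apply (continuous_mult (fun y => psi (interp (s y) j / rho j))
           (fun _ => rho j)); [|apply continuous_const].
  apply (continuous_comp_within (inJbar Jpos) psi
           (fun y => interp (s y) j / rho j)).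
  - intros y. apply interp_ratio_in_Jbar; auto.
  - unfold interp, Rdiv.
    apply (continuous_mult (fun y => rho j + s y * (fI j - rho j))
             (fun _ => / rho j)); [|apply continuous_const].
    apply (continuous_plus (fun _ => rho j) (fun y => s y * (fI j - rho j)));
      [apply continuous_const|].
    apply (continuous_mult s (fun _ => fI j - rho j)); [exact Hs|].
    apply continuous_const.
  - apply psi_continuous, interp_ratio_in_Jbar; auto.
Qed.

End Interpolation.

Section Decay.

Variables (n : nat) (Jpos : bool) (psi : R -> R) (rho fI : nat -> R)
  (lam mu : R).

Hypothesis lam_pos : 0 < lam.
Hypothesis rho_bounds : forall j, (j < n)%nat -> 0 < rho j < 1.
Hypothesis rho_sum : rsum n rho = 1.
Hypothesis fI_nonneg : forall j, (j < n)%nat -> 0 <= fI j.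
Hypothesis fI_sum : rsum n fI = 1.
Hypothesis psi_generator : entropy_generator Jpos psi.
Hypothesis curvature :
  forall u : nat -> R,
    (forall j, (j < n)%nat -> 0 <= u j <= 1) ->
    rsum n u = 1 ->
    (forall j, (j < n)%nat -> inJ Jpos (u j / rho j)) ->
    second_variation n psi rho u >= mu / (2 * lam) * first_variation n psi rho u.

Let rho_pos j (Hj : (j < n)%nat) : 0 < rho j := proj1 (rho_bounds j Hj).

Let psi_derivable x (Hx : inJ Jpos x) :
  ex_derive psi x /\ ex_derive (Derive psi) x.
Proof.
  destruct psi_generator as [_ [Hd _]]. destruct (Hd x Hx) as [H1 [H2 _]].
  split; assumption.
Qed.

Lemma interp_ratios_in_J r :
  0 <= r < 1 -> forall j, (j < n)%nat -> inJ Jpos (interp rho fI r j / rho j).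
Proof. intros Hr j Hj. apply interp_ratio_in_J; auto. Qed.

Lemma interp_curvature r :
  0 <= r <= 1 ->
  (forall j, (j < n)%nat -> inJ Jpos (interp rho fI r j / rho j)) ->
  mu * first_variation n psi rho (interp rho fI r)
    <= 2 * lam * second_variation n psi rho (interp rho fI r).
Proof.
  intros Hr HJ.
  replace (mu * first_variation n psi rho (interp rho fI r))
    with (2 * lam * (mu / (2 * lam) * first_variation n psi rho (interp rho fI r)))
    by (field; lra).
  apply Rmult_le_compat_l; [lra|]. apply Rge_le, curvature; [| |exact HJ].
  - intros j Hj. pose proof (rho_bounds j Hj). pose proof (fI_nonneg j Hj).
    pose proof (rsum_term_le n fI j fI_nonneg Hj). unfold interp. nra.
  - unfold interp. rewrite rsum_plus, rsum_scal, rsum_minus, rho_sum, fI_sum. ring.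
Qed.

Lemma first_variation_decay t :
  0 <= t ->
  (forall j, (j < n)%nat -> inJ Jpos (fI j / rho j)) ->
  first_variation n psi rho (interp rho fI (exp (- (2 * lam) * t)))
    <= exp (- (2 * lam + mu) * t) * first_variation n psi rho (interp rho fI 1).
Proof.
  intros Ht HJ1.
  set (s x := exp (- (2 * lam) * x)).
  assert (HJ : forall x, 0 <= x ->
            forall j, (j < n)%nat -> inJ Jpos (interp rho fI (s x) j / rho j)).
  { intros x Hx. destruct (Rle_lt_or_eq_dec 0 x Hx) as [Hx'|<-].
    - apply interp_ratios_in_J. unfold s.
      pose proof (exp_neg_lt_1 (2 * lam) x ltac:(lra) Hx').
      pose proof (exp_pos (- (2 * lam) * x)). lra.
    - intros j Hj. unfold s. rewrite Rmult_0_r, exp_0, interp_1. auto. }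
  assert (Hd : forall x, 0 <= x ->
            is_derive (fun x => first_variation n psi rho (interp rho fI (s x))) x
              (- (2 * lam) * s x * first_variation_slope n psi rho fI (s x))).
  { intros x Hx.
    apply (is_derive_comp (fun r => first_variation n psi rho (interp rho fI r)) s).
    - apply (is_derive_first_variation_interp n Jpos); auto.
    - unfold s. auto_derive; [auto|ring]. }
  replace (first_variation n psi rho (interp rho fI 1))
    with (first_variation n psi rho (interp rho fI (s 0)))
    by (unfold s; rewrite Rmult_0_r, exp_0; reflexivity).
  change (exp (- (2 * lam) * t)) with (s t).
  apply (exp_decay_of_derive_le
           (fun x => first_variation n psi rho (interp rho fI (s x)))
           (fun x => - (2 * lam) * s x * first_variation_slope n psi rho fI (s x))
           (2 * lam + mu) t Ht).
  - intros x Hx. eapply continuous_of_is_derive. apply Hd, Hx.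
  - intros x Hx. apply Hd. lra.
  - intros x Hx.
    pose proof (first_variation_slope_scale n psi rho fI (s x)) as Hscale.
    pose proof (exp_neg_bounds (2 * lam) x ltac:(lra) ltac:(lra)) as Hs.
    pose proof (interp_curvature (s x) ltac:(unfold s; lra) (HJ x ltac:(lra))).
    replace (- (2 * lam) * s x * first_variation_slope n psi rho fI (s x))
      with (- (2 * lam) * (s x * first_variation_slope n psi rho fI (s x))) by ring.
    rewrite Hscale. lra.
Qed.

Lemma entropy_le_first_variation r :
  0 <= r < 1 ->
  (2 * lam + mu) * e_psi n psi (interp rho fI r) rho
    <= 2 * lam * first_variation n psi rho (interp rho fI r).
Proof.
  intros Hr.
  set (G x := (2 * lam + mu) * e_psi n psi (interp rho fI x) rho
              - 2 * lam * first_variation n psi rho (interp rho fI x)).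
  set (dG x := (2 * lam + mu) * entropy_slope n psi rho fI x
               - 2 * lam * first_variation_slope n psi rho fI x).
  assert (Hd : forall x, 0 <= x <= r -> is_derive G x (dG x)).
  { intros x Hx. pose proof (interp_ratios_in_J x ltac:(lra)) as HJ.
    apply (is_derive_minus
             (fun x => (2 * lam + mu) * e_psi n psi (interp rho fI x) rho)
             (fun x => 2 * lam * first_variation n psi rho (interp rho fI x)));
      apply is_derive_scal.
    - apply (is_derive_entropy_interp n Jpos); auto.
    - apply (is_derive_first_variation_interp n Jpos); auto. }
  assert (HG0 : G 0 = 0).
  { unfold G. rewrite <- (entropy_slope_scale n psi rho fI 0), Rmult_0_l.
    unfold e_psi. rewrite (rsum_ext n _ (fun j => 0 * rho j)), rsum_scal; [ring|].
    intros j Hj. pose proof (rho_pos j Hj).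
    destruct psi_generator as [_ [_ [Hpsi1 _]]].
    unfold interp. replace ((rho j + 0 * (fI j - rho j)) / rho j) with 1
      by (field; lra).
    rewrite Hpsi1. ring. }
  enough (G r <= G 0) by (unfold G in *; lra).
  apply (nonincreasing_of_derive_nonpos G dG); [lra| | |].
  - intros x Hx. eapply continuous_of_is_derive. apply Hd, Hx.
  - intros x Hx. apply Hd. lra.
  - intros x Hx.
    pose proof (interp_curvature x ltac:(lra) (interp_ratios_in_J x ltac:(lra))).
    pose proof (entropy_slope_scale n psi rho fI x).
    pose proof (first_variation_slope_scale n psi rho fI x).
    assert (x * dG x <= 0) by (unfold dG; nra).
    nra.
Qed.

Lemma entropy_decay t :
  0 <= t ->
  e_psi n psi (interp rho fI (exp (- (2 * lam) * t))) rho
    <= exp (- (2 * lam + mu) * t) * e_psi n psi (interp rho fI 1) rho.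
Proof.
  intros Ht.
  (* [Rabs] keeps the argument of [interp] in [0, 1] at negative times: [psi] is
     only continuous within the closure of J, and continuity at time 0 is needed. *)
  set (g x := e_psi n psi (interp rho fI (exp (- (2 * lam) * Rabs x))) rho).
  assert (Hg : forall x, 0 <= x ->
            g x = e_psi n psi (interp rho fI (exp (- (2 * lam) * x))) rho)
    by (intros x Hx; unfold g; rewrite Rabs_pos_eq by exact Hx; reflexivity).
  rewrite <- (Hg t Ht).
  replace (e_psi n psi (interp rho fI 1) rho) with (g 0)
    by (rewrite Hg, Rmult_0_r, exp_0 by lra; reflexivity).
  apply (exp_decay_of_derive_le g
           (fun x => - (2 * lam) * exp (- (2 * lam) * x)
                     * entropy_slope n psi rho fI (exp (- (2 * lam) * x)))
           (2 * lam + mu) t Ht).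
  - intros x _. destruct psi_generator as [Hc _].
    apply (continuous_entropy_interp n Jpos psi rho fI rho_pos Hc fI_nonneg
             (fun y => exp (- (2 * lam) * Rabs y))).
    + apply continuous_exp_comp.
      apply (continuous_mult (fun _ => - (2 * lam)) (fun y => Rabs y));
        [apply continuous_const|apply continuous_Rabs_comp, continuous_id].
    + intros y.
      pose proof (exp_neg_bounds (2 * lam) (Rabs y) ltac:(lra) (Rabs_pos y)). lra.
  - intros x Hx.
    apply (is_derive_ext_loc
             (fun x => e_psi n psi (interp rho fI (exp (- (2 * lam) * x))) rho)).
    { eapply filter_imp; [|exact (open_gt 0 x ltac:(lra))].
      intros y Hy. symmetry. apply Hg. lra. }
    apply (is_derive_comp (fun r => e_psi n psi (interp rho fI r) rho)
             (fun x => exp (- (2 * lam) * x))).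
    + apply (is_derive_entropy_interp n Jpos); auto.
      apply interp_ratios_in_J.
      pose proof (exp_neg_lt_1 (2 * lam) x ltac:(lra) ltac:(lra)).
      pose proof (exp_pos (- (2 * lam) * x)). lra.
    + auto_derive; [auto|ring].
  - intros x Hx. rewrite Hg by lra.
    pose proof (exp_neg_lt_1 (2 * lam) x ltac:(lra) ltac:(lra)).
    pose proof (exp_pos (- (2 * lam) * x)).
    pose proof (entropy_le_first_variation (exp (- (2 * lam) * x)) ltac:(lra)).
    pose proof (entropy_slope_scale n psi rho fI (exp (- (2 * lam) * x))).
    nra.
Qed.

End Decay.

Lemma rsum_Amul n rho g : rsum n rho = 1 -> rsum n (Amul n rho g) = 0.
Proof.
  intros Hrho. unfold Amul.
  rewrite rsum_minus, (rsum_ext n _ (fun i => rsum n g * rho i)) by (intros; ring).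
  rewrite rsum_scal, Hrho. ring.
Qed.

Section Relaxation.

Variables (n : nat) (lam : R) (rho fI : nat -> R) (f : R -> nat -> R).

Hypothesis rho_sum : rsum n rho = 1.
Hypothesis fI_sum : rsum n fI = 1.
Hypothesis f_init : forall j, (j < n)%nat -> f 0 j = fI j.
Hypothesis f_ode :
  forall j t, (j < n)%nat ->
    is_derive (fun s => f s j) t (2 * lam * Amul n rho (f t) j).

Lemma relaxation_mass t : rsum n (f t) = 1.
Proof.
  rewrite <- fI_sum, <- (rsum_ext n _ _ f_init).
  apply (is_derive_zero_const (fun t => rsum n (fun j => f t j))). intros x.
  replace 0 with (rsum n (fun j => 2 * lam * Amul n rho (f x) j))
    by (rewrite rsum_scal, rsum_Amul by exact rho_sum; ring).
  apply (is_derive_rsum n (fun j t => f t j)). intros j Hj. apply f_ode, Hj.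
Qed.

Lemma relaxation_solution t j :
  (j < n)%nat -> f t j = interp rho fI (exp (- (2 * lam) * t)) j.
Proof.
  intros Hj. unfold interp.
  rewrite <- (f_init j Hj).
  enough (f t j - rho j = exp (- (2 * lam) * t) * (f 0 j - rho j)) by lra.
  apply (linear_ode_exp (fun t => f t j - rho j)). intros x.
  replace (- (2 * lam) * (f x j - rho j))
    with (2 * lam * Amul n rho (f x) j - 0)
    by (unfold Amul; rewrite relaxation_mass; ring).
  apply (is_derive_minus (fun t => f t j) (fun _ => rho j)).
  - apply f_ode, Hj.
  - auto_derive; reflexivity.
Qed.

End Relaxation.

Lemma e_psi_ext n psi u v rho :
  (forall j, (j < n)%nat -> u j = v j) -> e_psi n psi u rho = e_psi n psi v rho.
Proof. intros H. unfold e_psi. apply rsum_ext. intros j Hj. rewrite H; auto. Qed.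

Lemma I_psi_ext n lam psi u v rho :
  (forall j, (j < n)%nat -> u j = v j) -> I_psi n lam psi u rho = I_psi n lam psi v rho.
Proof. intros H. unfold I_psi. apply rsum_ext. intros j Hj. rewrite H; auto. Qed.

Theorem theorem4 (n : nat) (lam : R) (rho : nat -> R) (Jpos : bool)
  (psi : R -> R) (mu : R) (fI : nat -> R) (f : R -> nat -> R) :
  (2 <= n)%nat ->
  0 < lam ->
  (forall j, (j < n)%nat -> 0 < rho j < 1) ->
  rsum n rho = 1 ->
  entropy_generator Jpos psi ->
  0 < mu ->
  (forall u : nat -> R,
     (forall j, (j < n)%nat -> 0 <= u j <= 1) ->
     rsum n u = 1 ->
     (forall j, (j < n)%nat -> inJ Jpos (u j / rho j)) ->
     rsum n (fun j => psi_d2 psi (u j / rho j) * / rho j * (rho j - u j) ^ 2)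
       >= mu / (2 * lam) * rsum n (fun j => psi_d1 psi (u j / rho j) * (u j - rho j))) ->
  (forall j, (j < n)%nat -> 0 <= fI j) ->
  rsum n fI = 1 ->
  (forall j, (j < n)%nat -> f 0 j = fI j) ->
  (forall j t, (j < n)%nat ->
     is_derive (fun s => f s j) t (2 * lam * Amul n rho (f t) j)) ->
  forall t, 0 <= t ->
    ((forall j, (j < n)%nat -> inJ Jpos (fI j / rho j)) ->
       I_psi n lam psi (f t) rho <= exp (- (2 * lam + mu) * t) * I_psi n lam psi fI rho) /\
    e_psi n psi (f t) rho <= exp (- (2 * lam + mu) * t) * e_psi n psi fI rho.
Proof.
  intros _ Hlam Hrho Hrho_sum Hpsi _ Hcurv HfI HfI_sum Hf0 Hode t Ht.
  pose proof (relaxation_solution n lam rho fI f Hrho_sum HfI_sum Hf0 Hode t) as Hsol.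
  assert (HI : forall j, (j < n)%nat -> fI j = interp rho fI 1 j)
    by (intros; rewrite interp_1; reflexivity).
  rewrite (e_psi_ext n psi (f t) _ rho Hsol), (e_psi_ext n psi fI _ rho HI),
          (I_psi_ext n lam psi (f t) _ rho Hsol), (I_psi_ext n lam psi fI _ rho HI),
          !I_psi_first_variation.
  split.
  - intros HJ.
    pose proof (first_variation_decay n Jpos psi rho fI lam mu Hlam Hrho Hrho_sum
                  HfI HfI_sum Hpsi Hcurv t Ht HJ).
    nra.
  - exact (entropy_decay n Jpos psi rho fI lam mu Hlam Hrho Hrho_sum
             HfI HfI_sum Hpsi Hcurv t Ht).
Qed.
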